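(* For every partition $\mu$ (viewed as a weak composition of length $n$ by appending zeros), $\mathrm{PR}1(\mu)=\mathrm{PR}2(\mathrm{inc}(\mu))$, where \[ \mathrm{PR}1(\mu)=\prod_{s\in\mathrm{dg}(\mu)}(1-q^{\mathrm{leg}(s)}t^{\mathrm{arm}(s)+1}),\qquad \mathrm{PR}2(\alpha)=\prod_{i\ge1}(t;t)_{m_i}\prod_{\substack{s\in\mathrm{dg}(\mathrm{inc}(\alpha))\\ s\text{ not in row }1}}(1-q^{\mathrm{leg}(s)+1}t^{\mathrm{arm}(s)+1}), \] $m_i$ is the number of parts of $\alpha$ equal to $i$, and $(t;t)_k=(1-t)(1-t^2)\cdots(1-t^k)$.
   Context: For a weak composition $\alpha=(\alpha_1,\dots,\alpha_n)$ (nonnegative integers), $\mathrm{dg}(\alpha)$ is the set of cells $(i,r)$, $1\le i\le n$, $1\le r\le\alpha_i$ (column $i$ from the left has $\alpha_i$ cells; rows counted from the bottom). $\mathrm{leg}(i,r)=\alpha_i-r$. $\mathrm{arm}(i,r)$ is the number of cells $(j,r)\in\mathrm{dg}(\alpha)$ with $j>i$ and $\alpha_j\le\alpha_i$, plus the number of cells $(j,r-1)\in\mathrm{dg}(\alpha)$ with $j<i$ and $\alpha_j<\alpha_i$. $\mathrm{inc}(\alpha)$ is the rearrangement of $\alpha$ into weakly increasing order. *)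

From mathcomp Require Import all_boot all_order all_algebra.
Set Implicit Arguments. Unset Strict Implicit. Unset Printing Implicit Defensive.
Import GRing.Theory.
Local Open Scope ring_scope.

(* A weak composition alpha = (alpha_1,...,alpha_n) is a seq nat;
   alpha_i (1-indexed) is [part a i]. *)
Definition part (a : seq nat) (i : nat) : nat := nth 0%N a i.-1.

Definition in_dg (a : seq nat) (i r : nat) : bool :=
  [&& (1 <= i)%N, (i <= size a)%N, (1 <= r)%N & (r <= part a i)%N].

Definition dg (a : seq nat) : seq (nat * nat) :=
  [seq (i, r) | i <- iota 1 (size a), r <- iota 1 (part a i)].

Definition leg (a : seq nat) (s : nat * nat) : nat := (part a s.1 - s.2)%N.

Definition arm (a : seq nat) (s : nat * nat) : nat :=
  let i := s.1 in let r := s.2 in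
  (count (fun j => (i < j)%N && (part a j <= part a i)%N && in_dg a j r)
         (iota 1 (size a))
   + count (fun j => (j < i)%N && (part a j < part a i)%N && (2 <= r)%N
                     && in_dg a j r.-1)
         (iota 1 (size a)))%N.

Definition inc (a : seq nat) : seq nat := sort leq a.

Definition tpoch {R : comRingType} (t : R) (k : nat) : R :=
  \prod_(1 <= i < k.+1) (1 - t ^+ i).

Definition PR1 {R : comRingType} (q t : R) (mu : seq nat) : R :=
  \prod_(s <- dg mu) (1 - q ^+ leg mu s * t ^+ (arm mu s).+1).

(* m_i = number of parts equal to i; m_i = 0 for i > max part, so the
   product over i >= 1 is the finite product below. *)
Definition PR2 {R : comRingType} (q t : R) (a : seq nat) : R :=
  (\prod_(1 <= i < (\max_(x <- a) x).+1) tpoch t (count_mem i a)) *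
  \prod_(s <- dg (inc a) | s.2 != 1%N)
     (1 - q ^+ (leg (inc a) s).+1 * t ^+ (arm (inc a) s).+1).

Definition is_partition (mu : seq nat) : bool :=
  sorted geq mu && all (fun x => 0 < x)%N mu.

Definition pad (n : nat) (mu : seq nat) : seq nat := mu ++ nseq (n - size mu) 0%N.

(* Both products factor column by column.  For a column i of height v let
   e = ties(i) be the number of LATER columns of the same height, and let
   between(r, v) be the number of parts x with r <= x < v; this count only
   depends on the multiset of parts.
   - In the weakly decreasing composition a = pad n mu, the cell (i, r) has
     arm e + between(r, v) (lemma arm_decreasing), so the column contributes
     (1 - t^(e+1)) from its top cell times the "column factor"
     prod_(1 <= r < v) (1 - q^(v-r) t^(e + between(r, v) + 1)).
   - In the weakly increasing composition b = inc a, the cell (i, r+1) has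
     arm e + between(r, v) as well (lemma arm_increasing), so the cells above
     row 1 contribute exactly the same column factor.
   - The pairs (height, ties) of all columns form a multiset, the column
     profile, which depends only on the multiset of parts (its multiplicity
     of (y, k) is [k < m_y]); hence the column factors agree, and the product
     of the top-cell factors over the profile is prod_i (t;t)_(m_i). *)

From mathcomp Require Import all_boot all_order all_algebra zify.
Import GRing.Theory.
Local Open Scope nat_scope.

Lemma iota_succ m n : iota m.+1 n = map S (iota m n).
Proof. exact: (iotaDl 1). Qed.

(* Counting over a suffix or a prefix of a sequence as counting over the
   indices of the whole sequence; this turns the index-based definition of
   [arm] into counts over parts. *)
Section CountNth.
Variables (T : Type) (x0 : T) (P : pred T).

Lemma count_drop_nth s k :
  count P (drop k s) = count (fun j => (k <= j) && P (nth x0 s j)) (iota 0 (size s)).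
Proof.
elim: s k => [|x s IH] [|k] //=; rewrite iota_succ count_map.
- by rewrite -(IH 0) drop0.
- by rewrite IH.
Qed.

Lemma count_take_nth s k :
  count P (take k s) = count (fun j => (j < k) && P (nth x0 s j)) (iota 0 (size s)).
Proof.
elim: s k => [|x s IH] [|k] //=; rewrite iota_succ count_map.
- by rewrite (eq_count (a2 := pred0)) ?count_pred0.
- by rewrite IH.
Qed.

End CountNth.

(* The arm of the cell (i+1, r), 0-indexed column i: parts after column i
   in the same row, and parts before column i in the row below. *)
Lemma arm_nth (a : seq nat) (i r : nat) :
  arm a (i.+1, r) =
    count (fun x => (x <= nth 0 a i) && (0 < r <= x)) (drop i.+1 a)
  + count (fun x => (x < nth 0 a i) && (1 < r) && (r.-1 <= x)) (take i a).
Proof.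
rewrite /arm /= iota_succ !count_map (count_drop_nth _ 0) (count_take_nth _ 0).
congr addn; apply: eq_in_count => j; rewrite mem_iota /in_dg /part /= => ->.
all: by case: r => [|[|r]]; rewrite /= ?andbF ?andbT ?ltnS -?andbA.
Qed.

Lemma perm_eq_count_mem (T : eqType) (s1 s2 : seq T) :
  (forall x, count_mem x s1 = count_mem x s2) -> perm_eq s1 s2.
Proof. by move=> eq_cnt; apply/allP => x _; rewrite /= eq_cnt. Qed.

Lemma geq_transitive : transitive geq.
Proof. by move=> y x z xy yz; exact: leq_trans yz xy. Qed.

Lemma sorted_around_nth {e : rel nat} {a : seq nat} {i : nat} :
  transitive e -> i < size a -> sorted e a ->
  all (fun x => e x (nth 0 a i)) (take i a) /\ all (e (nth 0 a i)) (drop i.+1 a).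
Proof.
move=> e_tr ilt; rewrite (sorted_pairwise e_tr) -{1}(cat_take_drop i a) (drop_nth 0 ilt).
rewrite pairwise_cat /= => /and4P[/allrelP earlier _ later _]; split=> //.
by apply/allP => x x_in; apply: earlier => //; exact: mem_head.
Qed.

Definition ties (a : seq nat) (i : nat) : nat := count_mem (nth 0 a i) (drop i.+1 a).

Definition between (a : seq nat) (r v : nat) : nat := count (fun x => r <= x < v) a.

Lemma count_le_split (s : seq nat) (r v : nat) : r <= v ->
  count (fun x => r <= x <= v) s = count_mem v s + count (fun x => r <= x < v) s.
Proof.
move=> rv; elim: s => //= x s ->; rewrite addnACA; congr addn.
by case: ltngtP => [xv|xv|->]; rewrite ?rv ?andbT ?andbF.
Qed.

Lemma arm_decreasing (a : seq nat) (i r : nat) :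
  sorted geq a -> i < size a -> 0 < r <= nth 0 a i ->
  arm a (i.+1, r) = ties a i + between a r (nth 0 a i).
Proof.
move=> a_sorted ilt /andP[r_gt0 r_le]; set v := nth 0 a i.
have [earlier later] := sorted_around_nth geq_transitive ilt a_sorted.
have between_later : between a r v = count (fun x => r <= x < v) (drop i.+1 a).
  rewrite /between -{1}(cat_take_drop i a) (drop_nth 0 ilt) count_cat /= ltnn andbF.
  rewrite (eq_in_count (a2 := pred0)) ?count_pred0 // => x /(allP earlier) /= vx.
  by rewrite ltnNge vx andbF.
rewrite arm_nth between_later /ties -count_le_split //.
rewrite [X in _ + X](eq_in_count (a2 := pred0)) ?count_pred0 ?addn0; last first.
  by move=> x /(allP earlier) /= vx; rewrite ltnNge vx.
apply: eq_in_count => x /(allP later) /= xv.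
by rewrite xv r_gt0 andbT.
Qed.

Lemma arm_increasing (b : seq nat) (i r : nat) :
  sorted leq b -> i < size b -> 0 < r < nth 0 b i ->
  arm b (i.+1, r.+1) = ties b i + between b r (nth 0 b i).
Proof.
move=> b_sorted ilt /andP[r_gt0 r_lt]; set v := nth 0 b i.
have [earlier later] := sorted_around_nth leq_trans ilt b_sorted.
have between_earlier : between b r v = count (fun x => r <= x < v) (take i b).
  rewrite /between -{1}(cat_take_drop i b) (drop_nth 0 ilt) count_cat /= ltnn andbF.
  rewrite [X in _ + X](eq_in_count (a2 := pred0)) ?count_pred0 ?addn0 // => x /(allP later) /= vx.
  by rewrite ltnNge vx andbF.
rewrite arm_nth between_earlier /ties; congr addn.
- apply: eq_in_count => x /(allP later) /= vx.
  by rewrite eqn_leq vx andbT (leq_trans r_lt vx) andbT.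
- apply: eq_in_count => x /(allP earlier) /= xv.
  by rewrite ltnS r_gt0 andbT andbC.
Qed.

Definition column_profile (c : seq nat) : seq (nat * nat) :=
  [seq (nth 0 c i, ties c i) | i <- iota 0 (size c)].

Lemma column_profile_cons (x : nat) (c : seq nat) :
  column_profile (x :: c) = (x, count_mem x c) :: column_profile c.
Proof. by rewrite /column_profile /= iota_succ -map_comp /ties /= drop0. Qed.

(* The pair (y, k) occurs once in the profile iff k < m_y, so the profile
   depends only on the multiset of parts. *)
Lemma count_column_profile (c : seq nat) (y k : nat) :
  count_mem (y, k) (column_profile c) = (k < count_mem y c).
Proof.
elim: c => [|x c IH] //; rewrite column_profile_cons /= IH xpair_eqE.
case: (eqVneq x y) => [->|] //=.
by rewrite add1n ltnS; case: ltngtP.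
Qed.

Lemma perm_column_profile (a b : seq nat) :
  perm_eq a b -> perm_eq (column_profile a) (column_profile b).
Proof.
move=> ab; apply: perm_eq_count_mem => -[y k].
by rewrite !count_column_profile (permP ab).
Qed.

Lemma count_graded_pairs (f : nat -> nat) (s : seq nat) (y k : nat) : uniq s ->
  count_mem (y, k) (flatten [seq [seq (i, j) | j <- iota 0 (f i)] | i <- s])
  = (y \in s) && (k < f y).
Proof.
elim: s => [|i s IH] //= /andP[i_notin s_uniq]; rewrite count_cat IH // count_map inE.
case: (eqVneq y i) => [->|yi] /=.
- rewrite (negbTE i_notin) addn0 (eq_count (a2 := pred1 k)); last first.
    by move=> j /=; rewrite xpair_eqE eqxx eq_sym.
  by rewrite (count_uniq_mem _ (iota_uniq _ _)) mem_iota.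
- rewrite (eq_count (a2 := pred0)) ?count_pred0 // => j /=.
  by rewrite xpair_eqE eq_sym (negbTE yi).
Qed.

Local Open Scope ring_scope.

Section Products.
Variables (R : comRingType) (q t : R).

Definition top_factor (v e : nat) : R := if (0 < v)%N then 1 - t ^+ e.+1 else 1.

(* Factor contributed by the cells of rows 1 .. v-1 of such a column to
   PR1, and by the cells of rows 2 .. v to PR2. *)
Definition column_factor (a : seq nat) (v e : nat) : R :=
  \prod_(r <- iota 1 v.-1) (1 - q ^+ (v - r) * t ^+ (e + between a r v).+1).

Lemma column_split (a : seq nat) (v e : nat) :
  \prod_(r <- iota 1 v) (1 - q ^+ (v - r) * t ^+ (e + between a r v).+1)
  = top_factor v e * column_factor a v e.
Proof.
rewrite /top_factor /column_factor; case: v => [|w]; first by rewrite !big_nil mulr1.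
have -> : iota 1 w.+1 = iota 1 w ++ [:: w.+1] by rewrite -[w.+1 in LHS]addn1 iotaD add1n.
have top_between : between a w.+1 w.+1 = 0%N.
  by rewrite /between (eq_count (a2 := pred0)) ?count_pred0 // => x /=; rewrite ltnS andbC; case: leqP.
by rewrite big_cat big_seq1 subnn top_between expr0 mul1r addn0 mulrC.
Qed.

Lemma PR1_column_profile (a : seq nat) : sorted geq a ->
  PR1 q t a = \prod_(p <- column_profile a) top_factor p.1 p.2
            * \prod_(p <- column_profile a) column_factor a p.1 p.2.
Proof.
move=> a_sorted; rewrite /PR1 /dg big_allpairs_dep iota_succ !big_map -big_split /=.
rewrite big_seq [RHS]big_seq; apply: eq_bigr => i; rewrite mem_iota /= => ilt.
rewrite -column_split /part /= big_seq [RHS]big_seq; apply: eq_bigr => r.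
by rewrite mem_iota /leg /= => r_range; rewrite arm_decreasing //; lia.
Qed.

Lemma PR2_cells_column_profile (a b : seq nat) : sorted leq b -> perm_eq b a ->
  \prod_(s <- dg b | s.2 != 1%N) (1 - q ^+ (leg b s).+1 * t ^+ (arm b s).+1)
  = \prod_(p <- column_profile b) column_factor a p.1 p.2.
Proof.
move=> b_sorted ba; rewrite /dg big_mkcond big_allpairs_dep iota_succ !big_map.
rewrite big_seq [RHS]big_seq; apply: eq_bigr => i; rewrite mem_iota /= => ilt.
rewrite /part /column_factor /=; case v_eq: (nth 0 b i) => [|w] /=; first by rewrite !big_nil.
rewrite big_cons /= mul1r iota_succ big_map big_seq [RHS]big_seq.
apply: eq_bigr => r; rewrite mem_iota => r_range.
rewrite /leg /part /= arm_increasing //; last by rewrite v_eq; lia.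
rewrite v_eq /between (permP ba) eqSS -lt0n.
have -> : (w - r).+1 = (w.+1 - r)%N by lia.
by case/andP: r_range => ->.
Qed.

Lemma tpoch_iota (k : nat) : tpoch t k = \prod_(j <- iota 0 k) (1 - t ^+ j.+1).
Proof. by rewrite /tpoch /index_iota subSS subn0 iota_succ big_map. Qed.

Lemma tpoch_column_profile (b : seq nat) :
  \prod_(1 <= i < (\max_(x <- b) x).+1) tpoch t (count_mem i b)
  = \prod_(p <- column_profile b) top_factor p.1 p.2.
Proof.
set M := \max_(x <- b) x.
pose cells := flatten [seq [seq (i, j) | j <- iota 0 (count_mem i b)] | i <- iota 1 M].
have -> : index_iota 1 M.+1 = iota 1 M by rewrite /index_iota subSS subn0.
transitivity (\prod_(p <- cells) (1 - t ^+ p.2.+1)).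
  rewrite big_flatten /= big_map; apply: eq_bigr => i _.
  by rewrite tpoch_iota big_map.
rewrite /top_factor -big_mkcond -[RHS]big_filter; apply: perm_big.
apply: perm_eq_count_mem => -[y k]; rewrite count_graded_pairs ?iota_uniq //.
rewrite count_filter mem_iota; case: y => [|y].
  by rewrite /= (eq_count (a2 := pred0)) ?count_pred0 // => -[[|y'] k'] /=; rewrite ?andbF.
rewrite (eq_count (a2 := pred1 (y.+1, k))) ?count_column_profile; last first.
  by move=> [y' k'] /=; case: eqP => // -[-> _].
case k_lt: (k < count_mem y.+1 b)%N; rewrite ?andbF //= ltnS.
suff -> : (y.+1 <= M)%N by [].
apply: (@leq_bigmax_seq _ b xpredT (fun x => x) y.+1) => //.
by rewrite -has_pred1 has_count (leq_ltn_trans (leq0n k) k_lt).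
Qed.

End Products.

Lemma pad_sorted (n : nat) (mu : seq nat) : sorted geq mu -> sorted geq (pad n mu).
Proof.
move=> mu_sorted; rewrite /pad !(sorted_pairwise geq_transitive) pairwise_cat.
rewrite -(sorted_pairwise geq_transitive) mu_sorted /=; apply/andP; split.
- by apply/allrelP => x y _ /nseqP[-> _].
- by elim: (n - size mu)%N => //= k ->; rewrite andbT; apply/allP => x /nseqP[-> _].
Qed.

Theorem mainTheorem10 (R : comRingType) (q t : R) (n : nat) (mu : seq nat) :
  is_partition mu -> (size mu <= n)%N ->
  PR1 q t (pad n mu) = PR2 q t (inc (pad n mu)).
Proof.
move=> /andP[mu_sorted _] _; set a := pad n mu; set b := inc a.
have a_sorted : sorted geq a by exact: pad_sorted.
have b_sorted : sorted leq b by apply: sort_sorted; exact: leq_total.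
have ba : perm_eq b a by rewrite perm_sort.
have inc_b : inc b = b by apply: sorted_sort => //; exact: leq_trans.
rewrite /PR2 inc_b tpoch_column_profile (@PR2_cells_column_profile _ q t a b b_sorted ba).
rewrite PR1_column_profile //; congr (_ * _).
all: by apply: perm_big; apply: perm_column_profile; rewrite perm_sym.
Qed.
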